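(* There is no SLCS formula $\varphi$ such that for every neighbourhood model $\mathcal M$ with underlying space $(X,\mathcal N)$: $(X,\mathcal N)$ is connected if and only if $\mathcal M,x\models\varphi$ for every $x\in X$. (For any neighbourhood model $\mathcal M$, the model $\mathcal M'$ consisting of two disjoint, mutually unconnected copies of $\mathcal M$ admits a path preserving bisimulation with $\mathcal M$ relating each point of $\mathcal M$ to both of its copies.)
   Context: A neighbourhood space $(X,\mathcal N)$ assigns to each $x\in X$ a filter $\mathcal N(x)$ on $X$ (closed under finite intersections and supersets, not containing $\emptyset$) such that $x\in N$ for all $N\in\mathcal N(x)$. Closure: $\mathcal C(A)=\{x\mid\forall N\in\mathcal N(x): A\cap N\neq\emptyset\}$. Subsets $U,V$ are semi-separated if $\mathcal C(U)\cap V=U\cap\mathcal C(V)=\emptyset$; a set is connected if it is not the union of two non-empty semi-separated sets; the space is connected if $X$ is. Continuity: $f$ continuous iff $f^{-1}[N]\in\mathcal N_1(x)$ for all $N\in\mathcal N_2(f(x))$. An index space $(I,\mathcal N_I,\le,0)$ is a connected neighbourhood space with a linear order with least element $0$. A neighbourhood model $\mathcal M=((X,\mathcal N),\mathcal I,V)$ has an index space $\mathcal I$ and a valuation $V:X\to\mathcal P(\mathsf P)$ for a fixed countable set $\mathsf P$ of atoms; a path is a continuous $p:I\to X$. SLCS formulas: $\varphi::=a\mid\top\mid\neg\varphi\mid\varphi\wedge\varphi\mid\mathcal N\varphi\mid\varphi\,\mathcal R\,\varphi\mid\varphi\,\mathcal P\,\varphi$ with $a\in\mathsf P$. Semantics: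 $\mathcal M,x\models a$ iff $a\in V(x)$; Booleans as usual; $\mathcal M,x\models\mathcal N\varphi$ iff $x\in\mathcal C(\{y\mid\mathcal M,y\models\varphi\})$; $\mathcal M,x\models\varphi\,\mathcal R\,\psi$ iff there are a path $p$ and $n$ with $p(n)=x$, $\mathcal M,p(0)\models\psi$ and $\mathcal M,p(i)\models\varphi$ for all $0<i\le n$; $\mathcal M,x\models\varphi\,\mathcal P\,\psi$ iff there are a path $p$ with $p(0)=x$ and $n$ with $\mathcal M,p(n)\models\psi$ and $\mathcal M,p(i)\models\varphi$ for all $0\le i<n$. Path preserving bisimulation: for models $\mathcal M_1,\mathcal M_2$ over the same index space with path sets $\mathcal P_1,\mathcal P_2$, a triple $(Z_{\mathcal N},Z_1,Z_2)$, $\emptyset\ne Z_{\mathcal N}\subseteq X_1\times X_2$, $Z_1\subseteq(\mathcal P_1\times I)\times(\mathcal P_2\times I)$, $Z_2\subseteq(\mathcal P_2\times I)\times(\mathcal P_1\times I)$, such that: (1) at each pair $x_1Z_{\mathcal N}x_2$: $V_1(x_1)=V_2(x_2)$; for every $N_2\in\mathcal N_2(x_2)$ there is $N_1\in\mathcal N_1(x_1)$ with every $y_1\in N_1$ related to some $y_2\in N_2$; and symmetrically for every $N_1\in\mathcal N_1(x_1)$; (2) if $x_1Z_{\mathcal N}x_2$, $p(0)=x_1$, $n\ne0$, there are $q$ with $q(0)=x_2$ and $m$ with $p(n)Z_{\mathcal N}q(m)$, $(p,n)Z_1(q,m)$; (3) if $x_1Z_{\mathcal N}x_2$, $p(n)=x_1$,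 $n\ne0$, there are $q,m$ with $q(m)=x_2$, $p(0)Z_{\mathcal N}q(0)$, $(p,n)Z_1(q,m)$; (4) if $(p,n)Z_1(q,m)$ and $0<k_q<m$, there is $0<k_p<n$ with $p(k_p)Z_{\mathcal N}q(k_q)$; (5) if $x_1Z_{\mathcal N}x_2$, $q(0)=x_2$, $m\ne0$, there are $p$ with $p(0)=x_1$ and $n$ with $p(n)Z_{\mathcal N}q(m)$, $(q,m)Z_2(p,n)$; (6) if $x_1Z_{\mathcal N}x_2$, $q(m)=x_2$, $m\neq0$, there are $p,n$ with $p(n)=x_1$, $p(0)Z_{\mathcal N}q(0)$, $(q,m)Z_2(p,n)$; (7) if $(q,m)Z_2(p,n)$ and $0<k_p<n$, there is $0<k_q<m$ with $p(k_p)Z_{\mathcal N}q(k_q)$. *)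

Record nbhd_space (X : Type) : Type := NbhdSpace {
  nbhd : X -> (X -> Prop) -> Prop;
  nbhd_full : forall x, nbhd x (fun _ => True);
  nbhd_inter : forall x A B, nbhd x A -> nbhd x B -> nbhd x (fun y => A y /\ B y);
  nbhd_super : forall x A B, nbhd x A -> (forall y, A y -> B y) -> nbhd x B;
  nbhd_proper : forall x, ~ nbhd x (fun _ => False);
  nbhd_mem : forall x N, nbhd x N -> N x
}.
Arguments nbhd {X} _ _ _.

Definition closure {X : Type} (S : nbhd_space X) (A : X -> Prop) : X -> Prop :=
  fun x => forall N, nbhd S x N -> exists y, A y /\ N y.

Definition semi_separated {X : Type} (S : nbhd_space X) (U V : X -> Prop) : Prop :=
  (forall x, ~ (closure S U x /\ V x)) /\ (forall x, ~ (U x /\ closure S V x)).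

Definition connected_set {X : Type} (S : nbhd_space X) (A : X -> Prop) : Prop :=
  ~ exists U V : X -> Prop,
      (exists u, U u) /\ (exists v, V v) /\ semi_separated S U V /\
      (forall x, A x <-> U x \/ V x).

Definition connected_space {X : Type} (S : nbhd_space X) : Prop :=
  connected_set S (fun _ => True).

Definition continuous {X Y : Type} (S1 : nbhd_space X) (S2 : nbhd_space Y)
  (f : X -> Y) : Prop :=
  forall x N, nbhd S2 (f x) N -> nbhd S1 x (fun y => N (f y)).

Record index_space : Type := IndexSpace {
  I_car : Type;
  I_nbhd : nbhd_space I_car;
  I_le : I_car -> I_car -> Prop;
  I_le_refl : forall i, I_le i i;
  I_le_antisym : forall i j, I_le i j -> I_le j i -> i = j;
  I_le_trans : forall i j k, I_le i j -> I_le j k -> I_le i k;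
  I_le_total : forall i j, I_le i j \/ I_le j i;
  I_zero : I_car;
  I_zero_least : forall i, I_le I_zero i;
  I_connected : connected_space I_nbhd
}.

Definition I_lt (I : index_space) (i j : I_car I) : Prop := I_le I i j /\ i <> j.

Definition atom := nat.

Record nbhd_model : Type := NbhdModel {
  M_car : Type;
  M_space : nbhd_space M_car;
  M_index : index_space;
  M_val : M_car -> atom -> Prop
}.

Definition is_path (M : nbhd_model) (p : I_car (M_index M) -> M_car M) : Prop :=
  continuous (I_nbhd (M_index M)) (M_space M) p.

Inductive slcs : Type :=
| FAtom : atom -> slcs
| FTop : slcs
| FNeg : slcs -> slcs
| FAnd : slcs -> slcs -> slcs
| FNear : slcs -> slcs
| FReach : slcs -> slcs -> slcs
| FPass : slcs -> slcs -> slcs.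

Fixpoint sat (M : nbhd_model) (f : slcs) : M_car M -> Prop :=
  match f with
  | FAtom a => fun x => M_val M x a
  | FTop => fun _ => True
  | FNeg g => fun x => ~ sat M g x
  | FAnd g h => fun x => sat M g x /\ sat M h x
  | FNear g => fun x => closure (M_space M) (sat M g) x
  | FReach g h => fun x =>
      exists (p : I_car (M_index M) -> M_car M) (n : I_car (M_index M)),
        is_path M p /\ p n = x /\ sat M h (p (I_zero (M_index M))) /\
        (forall i, I_lt (M_index M) (I_zero (M_index M)) i ->
                   I_le (M_index M) i n -> sat M g (p i))
  | FPass g h => fun x =>
      exists (p : I_car (M_index M) -> M_car M) (n : I_car (M_index M)),
        is_path M p /\ p (I_zero (M_index M)) = x /\ sat M h (p n) /\
        (forall i, I_le (M_index M) (I_zero (M_index M)) i ->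
                   I_lt (M_index M) i n -> sat M g (p i))
  end.

From Stdlib Require Import Setoid.

(* For a neighbourhood model M let [double_model M] be two disjoint,
   mutually unconnected copies of M: points are pairs (b, x) with a tag
   b : bool, the neighbourhoods of (b, x) are those of x placed in copy b,
   and valuation and index space are taken from M.  Projecting to the
   second component turns paths of the double into paths of M, and tagging
   turns paths of M into paths of the double; hence every formula holds at
   (b, x) exactly when it holds at x ([sat_double]).

   The double of a non-empty model is disconnected, its two copies being
   semi-separated ([double_not_connected]), while the one-point model is
   connected ([point_connected]).  A formula defining connectedness would
   hold everywhere in the one-point model, hence everywhere in its double,
   forcing the double to be connected: a contradiction. *)

Lemma closure_incl {X : Type} (S : nbhd_space X) (A : X -> Prop) (x : X) :
  A x -> closure S A x.
Proof.
  intros Ax N HN. exists x. split; [exact Ax | exact (nbhd_mem _ S x N HN)].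
Qed.

Lemma closure_ext {X : Type} (S : nbhd_space X) (A B : X -> Prop) (x : X) :
  (forall y, A y <-> B y) -> closure S A x <-> closure S B x.
Proof.
  intros HAB. split; intros Hc N HN; destruct (Hc N HN) as [y [Hy Ny]];
    exists y; split; firstorder.
Qed.

(* A space with at most one point is connected: two non-empty pieces would
   share that point, which then lies in one piece and the closure of the other. *)
Lemma connected_subsingleton {X : Type} (S : nbhd_space X) :
  (forall x y : X, x = y) -> connected_space S.
Proof.
  intros Hsub [U [V [[u Hu] [[v Hv] [[HUV _] _]]]]].
  apply (HUV v). split; [| exact Hv].
  rewrite <- (Hsub u v). now apply closure_incl.
Qed.

Definition discrete_space (X : Type) : nbhd_space X.
Proof.
  refine (@NbhdSpace X (fun x N => N x) _ _ _ _ _); simpl; auto.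
Defined.

Definition point_index : index_space.
Proof.
  refine (@IndexSpace unit (discrete_space unit) (fun _ _ => True)
            _ _ _ _ tt _ _); auto.
  - intros [] [] _ _. reflexivity.
  - apply connected_subsingleton. intros [] []. reflexivity.
Defined.

Definition point_model : nbhd_model :=
  NbhdModel unit (discrete_space unit) point_index (fun _ _ => False).

Lemma point_connected : connected_space (M_space point_model).
Proof.
  apply connected_subsingleton. intros [] []. reflexivity.
Qed.

(* Two disjoint copies of a neighbourhood space: the neighbourhoods of (b, x)
   are the sets whose copy-b slice is a neighbourhood of x. *)
Definition double_space {X : Type} (S : nbhd_space X) : nbhd_space (bool * X).
Proof.
  refine (@NbhdSpace (bool * X)
            (fun z N => nbhd S (snd z) (fun y => N (fst z, y))) _ _ _ _ _).
  - intros z. apply nbhd_full.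
  - intros z A B HA HB. exact (nbhd_inter _ S _ _ _ HA HB).
  - intros z A B HA HAB. apply (nbhd_super _ S _ _ _ HA). intros y. apply HAB.
  - intros z. apply nbhd_proper.
  - intros [b x] N HN. exact (nbhd_mem _ S _ _ HN).
Defined.

Definition double_model (M : nbhd_model) : nbhd_model :=
  NbhdModel (bool * M_car M) (double_space (M_space M)) (M_index M)
            (fun z => M_val M (snd z)).

Section Double.

Variable M : nbhd_model.

Lemma path_project (p : I_car (M_index M) -> bool * M_car M) :
  is_path (double_model M) p -> is_path M (fun i => snd (p i)).
Proof.
  intros Hp i N HN. exact (Hp i (fun z => N (snd z)) HN).
Qed.

Lemma path_lift (b : bool) (q : I_car (M_index M) -> M_car M) :
  is_path M q -> is_path (double_model M) (fun i => (b, q i)).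
Proof.
  intros Hq i N HN. exact (Hq i (fun y => N (b, y)) HN).
Qed.

Lemma closure_double (A : M_car M -> Prop) (z : bool * M_car M) :
  closure (M_space (double_model M)) (fun w => A (snd w)) z <->
  closure (M_space M) A (snd z).
Proof.
  destruct z as [b x]. split.
  - intros Hc N HN.
    assert (Hcopy : nbhd (M_space (double_model M)) (b, x)
                      (fun w => fst w = b /\ N (snd w))).
    { simpl. apply (nbhd_super _ _ _ _ _ HN). auto. }
    destruct (Hc _ Hcopy) as [[c y] [Ay [_ Ny]]]. now exists y.
  - intros Hc N HN.
    destruct (Hc _ HN) as [y [Ay Ny]]. now exists (b, y).
Qed.

Lemma sat_double (phi : slcs) :
  forall z : bool * M_car M, sat (double_model M) phi z <-> sat M phi (snd z).
Proof.
  induction phi as [a | | g IHg | g IHg h IHh | g IHg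
                   | g IHg h IHh | g IHg h IHh]; intros z; simpl.
  - tauto.
  - tauto.
  - rewrite IHg. tauto.
  - rewrite IHg, IHh. tauto.
  - rewrite <- closure_double. apply closure_ext, IHg.
  - split.
    + intros [p [n [Hp [Hn [Hh Hg]]]]].
      exists (fun i => snd (p i)), n. rewrite Hn.
      repeat split; [now apply path_project | now apply IHh |].
      intros i H0i Hin. apply IHg. now apply Hg.
    + intros [q [n [Hq [Hn [Hh Hg]]]]].
      exists (fun i => (fst z, q i)), n. rewrite Hn.
      repeat split; [now apply path_lift | now destruct z | now apply IHh |].
      intros i H0i Hin. apply IHg. now apply Hg.
  - split.
    + intros [p [n [Hp [H0 [Hh Hg]]]]].
      exists (fun i => snd (p i)), n. rewrite H0.
      repeat split; [now apply path_project | now apply IHh |].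
      intros i H0i Hin. apply IHg. now apply Hg.
    + intros [q [n [Hq [H0 [Hh Hg]]]]].
      exists (fun i => (fst z, q i)), n. rewrite H0.
      repeat split; [now apply path_lift | now destruct z | now apply IHh |].
      intros i H0i Hin. apply IHg. now apply Hg.
Qed.

End Double.

Lemma double_not_connected (M : nbhd_model) (x : M_car M) :
  ~ connected_space (M_space (double_model M)).
Proof.
  assert (Hsep : forall b z, ~ (closure (M_space (double_model M))
                                  (fun w => fst w = b) z /\ fst z <> b)).
  { intros b [c y] [Hc Hcb].
    assert (Hcopy : nbhd (M_space (double_model M)) (c, y)
                      (fun w => fst w = c)).
    { apply (nbhd_super _ _ _ _ _ (nbhd_full _ (M_space M) y)). auto. }
    destruct (Hc _ Hcopy) as [w [Hwb Hwc]]. simpl in Hcb. congruence. }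
  intros Hconn. apply Hconn.
  exists (fun w => fst w = true), (fun w => fst w = false).
  split; [now exists (true, x) |].
  split; [now exists (false, x) |].
  split; [split |].
  - intros z [Hc Hz]. apply (Hsep true z). split; [exact Hc | congruence].
  - intros z [Hz Hc]. apply (Hsep false z). split; [exact Hc | congruence].
  - intros [[|] y]; simpl; intuition congruence.
Qed.

Theorem proposition21 :
  ~ exists phi : slcs,
      forall M : nbhd_model,
        connected_space (M_space M) <-> (forall x : M_car M, sat M phi x).
Proof.
  intros [phi Hdef].
  assert (Hpoint : forall x, sat point_model phi x)
    by (apply Hdef, point_connected).
  apply (double_not_connected point_model tt), Hdef.
  intros z. apply sat_double, Hpoint.
Qed.
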